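(* Consider CRANE run for $K$ iterations with $\beta=c\log(\mathcal{N}_{\mathcal{F}}(\epsilon_{\mathrm b})KH|\mathcal{U}_A|/\delta)$, $\epsilon_{\mathrm b}=1/(KH|\mathcal{U}_A|)$, $\delta\in(0,1]$ and $c$ a suitable absolute constant, on a model class $\mathcal{F}$ containing the true model $f^*$. Then with probability at least $1-\delta/2$, $f^*\in\mathcal{B}^k$ for all $k\in[K]$.
   Context: Process: finite observation space $\mathcal{O}$, finite action space $\mathcal{A}$, horizon $H$; histories $\tau_h=(o_1,a_1,\dots,o_h,a_h)$; policies pick $a_h\sim\pi_h(\cdot\mid\tau_{h-1},o_h)$; reward $r_h(o_h,a_h)$; $V^\pi_f$ is the expected total reward of $\pi$ in model $f$ and $\mathbb{P}^\pi_f(\tau_H)$ the probability of $\tau_H$ under $\pi$ in $f$. $\mathcal{U}_h$ ($h\in[H]$) are given sets of tests (sequences of future observations and actions starting at step $h$) and $\mathcal{U}_{A,h}$ is the set of action sequences occurring in $\mathcal{U}_h$, $|\mathcal{U}_A|=\max_h|\mathcal{U}_{A,h}|$. $\mathcal{F}$ is a class of models (each giving valid trajectory distributions $\mathbb{P}^\pi_f$ for every $\pi$). Bracket number: a size-$N$ $\epsilon$-bracket of $\mathcal{F}$ is $\{(g_1^i,g_2^i)\}_{i=1}^N$ of functions of (policy, trajectory $\tau_H$) with $\sum_{\tau_H}|g_1^i(\pi,\tau_H)-g_2^i(\pi,\tau_H)|\le\epsilon$ for all $\pi,i$, such that each $f\in\mathcal{F}$ has some $i$ with $g_1^i(\pi,\tau_H)\le\mathbb{P}^\pi_f(\tau_H)\le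 g_2^i(\pi,\tau_H)$ for all $\tau_H,\pi$; $\mathcal{N}_{\mathcal{F}}(\epsilon)$ is the minimal $N$. Algorithm CRANE (input $\beta$): $\mathcal{B}^1=\mathcal{F}$, $\mathcal{D}=\emptyset$. For $k=1,\dots,K$: choose $(f^k,\pi^k)\in\arg\max_{f\in\mathcal{B}^k,\pi}V^\pi_f$; for each $h\in\{0,\dots,H-1\}$ and $u_a\in\mathcal{U}_{A,h+1}$, execute the policy that follows $\pi^k$ at steps $1,\dots,h-1$, a uniformly random action at step $h$ (if $h\ge1$), the actions of $u_a$ from step $h+1$, and uniform actions afterwards, adding (this policy, collected $\tau_H$) to $\mathcal{D}$; then $\mathcal{B}^{k+1}=\{f\in\mathcal{F}:\sum_{(\pi,\tau_H)\in\mathcal{D}}\log\mathbb{P}^\pi_f(\tau_H)\ge\max_{f'\in\mathcal{F}}\sum_{(\pi,\tau_H)\in\mathcal{D}}\log\mathbb{P}^\pi_{f'}(\tau_H)-\beta\}$. *)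

From HB Require Import structures.
From mathcomp Require Import all_boot all_order all_algebra.
From mathcomp Require Import all_classical all_reals.
From mathcomp Require Import ereal exp.
Set Implicit Arguments. Unset Strict Implicit. Unset Printing Implicit Defensive.
Import Order.TTheory GRing.Theory Num.Theory.
Local Open Scope ring_scope.
Local Open Scope classical_set_scope.

Section Crane.
Context {R : realType} {O A : finType} (H : nat).

(* histories tau_{h-1} = (o_1,a_1,...,o_{h-1},a_{h-1}) are sequences of pairs *)
Definition history := seq (O * A).
Definition traj := (H.-tuple (O * A))%type.

(* a model: the conditional law of o_h given the history tau_{h-1} *)
Definition model := history -> O -> R.
Definition valid_model (f : model) : Prop :=
  forall hst, (forall o, 0 <= f hst o) /\ \sum_(o : O) f hst o = 1.

(* a (general, history dependent, randomized) policy: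
   pi hst o a = pi_h(a | tau_{h-1} = hst, o_h = o), with h = size hst + 1 *)
Definition policy := history -> O -> A -> R.
Definition valid_policy (p : policy) : Prop :=
  forall hst o, (forall a, 0 <= p hst o a) /\ \sum_(a : A) p hst o a = 1.

Definition traj_prob (f : model) (p : policy) (t : traj) : R :=
  \prod_(i < H) (f (take i t) (tnth t i).1 * p (take i t) (tnth t i).1 (tnth t i).2).

(* V^pi_f, with reward r h o a = r_h(o,a), steps h = 1..H *)
Definition value (r : nat -> O -> A -> R) (f : model) (p : policy) : R :=
  \sum_(t : traj) traj_prob f p t * \sum_(i < H) r i.+1 (tnth t i).1 (tnth t i).2.

Definition unif (a : A) : R := (#|A|%:R)^-1.

(* the exploration policy of CRANE for h and action sequence u:
   pi^k at steps t <= h-1, uniform at step h (if h >= 1), the actions of u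
   at steps h+1, ..., h+|u|, uniform afterwards. *)
Definition explore (p : policy) (h : nat) (u : seq A) : policy :=
  fun hst o a =>
    let t := (size hst).+1 in
    if (t < h)%N then p hst o a
    else if t == h then unif a
    else if (t <= h + size u)%N then (if a == nth a u (t - h).-1 then 1 else 0)
    else unif a.

(* UA h = U_{A,h}; exploration policies of one iteration, for h = 0..H-1 and
   u in U_{A,h+1} *)
Definition explore_list (UA : nat -> seq (seq A)) (p : policy) : seq policy :=
  [seq explore p h u | h <- iota 0 H, u <- UA h.+1].

Definition dataset := seq (policy * traj).

Definition eln (x : R) : \bar R := if 0 < x then (ln x)%:E else -oo%E.

Definition loglik (f : model) (D : dataset) : \bar R :=
  (\sum_(d <- D) eln (traj_prob f d.1 d.2))%E.

(* B^{k+1} computed from the dataset D (the max over F read as a sup) *)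
Definition mleB (F : set model) (beta : R) (D : dataset) : set model :=
  [set f | F f /\ (ereal_sup [set loglik g D | g in F] - beta%:E <= loglik f D)%E].

Definition is_argmax (r : nat -> O -> A -> R) (B : set model) (fp : model * policy) : Prop :=
  B fp.1 /\ valid_policy fp.2 /\
  forall f p, B f -> valid_policy p -> value r f p <= value r fp.1 fp.2.

(* sequential sampling of one trajectory per policy in ps from the true model fs,
   appending (policy, trajectory) to D; returns the expectation of cont *)
Fixpoint episodes (fs : model) (ps : seq policy) (D : dataset)
    (cont : dataset -> R) : R :=
  match ps with
  | [::] => cont D
  | p :: ps' => \sum_(t : traj) traj_prob fs p t * episodes fs ps' (rcons D (p, t)) cont
  end.

(* pgood k B D: probability, for the remaining k iterations of CRANE started with
   current confidence set B and dataset D, that fs belongs to every confidence set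
   used in these iterations.  sel chooses (f^k, pi^k) from the confidence set. *)
Fixpoint pgood (fs : model) (F : set model) (beta : R) (UA : nat -> seq (seq A))
    (sel : set model -> model * policy) (k : nat) (B : set model) (D : dataset) : R :=
  match k with
  | 0 => 1
  | k'.+1 =>
      if `[< B fs >] then
        episodes fs (explore_list UA (sel B).2) D
          (fun D' => pgood fs F beta UA sel k' (mleB F beta D') D')
      else 0
  end.

Definition has_bracket (F : set model) (eps : R) (N : nat) : Prop :=
  exists g1 g2 : 'I_N -> policy -> traj -> R,
    (forall i p, valid_policy p -> \sum_(t : traj) `|g1 i p t - g2 i p t| <= eps) /\
    (forall f, F f -> exists i : 'I_N, forall p t, valid_policy p ->
        g1 i p t <= traj_prob f p t <= g2 i p t).

Definition bracket_number (F : set model) (eps : R) (N : nat) : Prop :=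
  has_bracket F eps N /\ forall M, has_bracket F eps M -> (N <= M)%N.

Definition UAsize (UA : nat -> seq (seq A)) : nat := \max_(1 <= h < H.+1) size (UA h).

End Crane.

Arguments pgood {R O A} H fs F beta UA sel k B D.
Arguments episodes {R O A} H fs ps D cont.

From HB Require Import structures.
From mathcomp Require Import all_boot all_order all_algebra.
From mathcomp Require Import all_classical all_reals.
From mathcomp Require Import ereal exp sequences.
From mathcomp Require Import zify ring lra.
From Stdlib Require List.
Import Order.TTheory GRing.Theory Num.Theory.
Local Open Scope ring_scope.
Local Open Scope classical_set_scope.

(* Weight each dataset D by its likelihood under the true model fs, and let
   S(D) be the sum, over the brackets containing some model of F, of the
   products of their upper functions along D.  If fs leaves the confidence set,
   some model of F beats it by a likelihood factor expR beta, so that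
   lik fs D <= expR (- beta) * S(D).  Sampling a trajectory under fs turns the
   likelihood-weighted expectation into a plain sum over trajectories, along
   which S grows by at most the mass 1 + eps of an upper bracket function.
   Summing over the K iterations, the failure probability is at most
   (K - 1) (1 + eps)^(K H |U_A|) expR (- beta) N <= 4 (K - 1) N expR (- beta),
   which is below delta / 2 for beta = 4 ln (N K H |U_A| / delta). *)

Section TrajectoryLaw.
Context {R : realType}.

Lemma sum_tuple_prod_kernel (X : finType) (q : seq X -> X -> R) :
  (forall s, \sum_x q s x = 1) -> forall n s,
  \sum_(u : n.-tuple X) \prod_(i < n) q (s ++ take i u) (tnth u i) = 1.
Proof.
move=> q1; elim=> [|n IH] s.
  by under eq_bigr do rewrite big_ord0; rewrite sumr_const card_tuple.
have cons_bij : bijective (fun xu : X * n.-tuple X => [tuple of xu.1 :: xu.2]).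
  exists (fun u : n.+1.-tuple X => (thead u, [tuple of behead u])).
    by case=> x u; congr (_, _); apply: val_inj.
  by move=> u; rewrite [RHS]tuple_eta.
transitivity (\sum_x \sum_(u : n.-tuple X)
    q s x * \prod_(i < n) q (rcons s x ++ take i u) (tnth u i)); last first.
  by rewrite -[RHS](q1 s); apply: eq_bigr => x _; rewrite -mulr_sumr IH mulr1.
rewrite pair_big (reindex _ (onW_bij _ cons_bij)); apply: eq_bigr => -[x u] _.
rewrite big_ord_recl /= cats0; congr (_ * _).
by apply: eq_bigr => i _; rewrite tnthS cat_rcons.
Qed.

Context {O A : finType} {H : nat}.

Lemma traj_prob_ge0 [f : @model R O A] [p] (t : traj H) :
  valid_model f -> valid_policy p -> 0 <= traj_prob f p t.
Proof.
by move=> vf vp; apply: prodr_ge0 => i _; rewrite mulr_ge0 ?(vf _).1 ?(vp _ _).1.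
Qed.

Lemma sum_traj_prob [f : @model R O A] [p] :
  valid_model f -> valid_policy p -> \sum_(t : traj H) traj_prob f p t = 1.
Proof.
move=> vf vp; pose q s (x : O * A) := f s x.1 * p s x.1 x.2.
apply: (@sum_tuple_prod_kernel _ q _ H [::]) => s.
rewrite -(pair_big xpredT xpredT (fun o a => f s o * p s o a)) -(vf s).2.
by apply: eq_bigr => o _; rewrite -mulr_sumr (vp s o).2 mulr1.
Qed.

Lemma valid_explore (p : @policy R O A) h u :
  (0 < #|A|)%N -> valid_policy p -> valid_policy (explore p h u).
Proof.
move=> A_gt0 vp hst o.
have unif_valid : (forall a, 0 <= @unif R A a) /\ \sum_a @unif R A a = 1.
  split=> [a|]; first by rewrite invr_ge0.
  rewrite sumr_const -[#|xpredT|]/#|A| -(mulr_natr ((#|A|%:R : R)^-1)).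
  by rewrite mulVf // pnatr_eq0 -lt0n.
rewrite /explore /=; case lt_h: ((size hst).+1 < h)%N; first exact: vp.
case ne_h: ((size hst).+1 == h); first exact: unif_valid.
case le_hu: ((size hst).+1 <= h + size u)%N; last exact: unif_valid.
set j := ((size hst).+1 - h).-1.
have j_lt : (j < size u)%N by move: lt_h ne_h le_hu; rewrite /j; lia.
split=> [a|]; first by case: ifP.
case: u {le_hu} j_lt => // x u j_lt.
under eq_bigr => a _ do rewrite (set_nth_default x a j_lt).
by rewrite -big_mkcond big_pred1_eq.
Qed.

Lemma valid_explore_list UA (p : @policy R O A) : (0 < #|A|)%N -> valid_policy p ->
  List.Forall valid_policy (explore_list H UA p).
Proof.
move=> A_gt0 vp; rewrite /explore_list; elim: (iota 0 H) => //= h hs IH.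
apply/List.Forall_app; split=> //.
by elim: (UA h.+1) => //= u us IHu; constructor=> //; apply: valid_explore.
Qed.

Lemma size_explore_list_le UA (p : @policy R O A) :
  (size (explore_list H UA p) <= H * UAsize H UA)%N.
Proof.
rewrite /explore_list size_allpairs_dep.
suff: forall m n, (m + n <= H)%N ->
    (sumn [seq size (UA h.+1) | h <- iota m n] <= n * UAsize H UA)%N.
  by apply; rewrite add0n.
move=> m n; elim: n m => [|n IH] m //= le_mnH.
rewrite mulSn leq_add ?IH ?addSnnS //.
by rewrite /UAsize (leq_bigmax_seq m.+1) // mem_index_iota; lia.
Qed.

End TrajectoryLaw.

Section Likelihood.
Context {R : realType} {O A : finType} {H : nat}.

Definition lik (f : @model R O A) (D : @dataset R O A H) : R :=
  \prod_(d <- D) traj_prob f d.1 d.2.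

Definition valid_dataset (D : @dataset R O A H) : Prop :=
  List.Forall (fun d => valid_policy d.1) D.

Lemma lik_ge0 [f D] : valid_model f -> valid_dataset D -> 0 <= lik f D.
Proof.
move=> vf; elim=> [|d {}D vd _ IH]; first by rewrite /lik big_nil.
by rewrite /lik big_cons mulr_ge0 // traj_prob_ge0.
Qed.

Lemma elnM (x y : R) : 0 <= x -> 0 <= y -> eln (x * y) = (eln x + eln y)%E.
Proof.
rewrite !le_eqVlt => /predU1P[<-|x_gt0] /predU1P[<-|y_gt0];
  rewrite /eln ?mul0r ?mulr0 ?ltxx ?addeNy //.
by rewrite mulr_gt0 // x_gt0 y_gt0 lnM.
Qed.

Lemma loglik_lik [f D] : valid_model f -> valid_dataset D -> loglik f D = eln (lik f D).
Proof.
move=> vf; elim=> [|d {}D vd vD IH].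
  by rewrite /loglik /lik !big_nil /eln ltr01 ln1.
by rewrite /loglik /lik !big_cons elnM ?traj_prob_ge0 ?lik_ge0 // -IH.
Qed.

End Likelihood.

Section Brackets.
Context {R : realType} {O A : finType} {H : nat}.
Local Notation model := (@model R O A).
Local Notation policy := (@policy R O A).
Local Notation traj := (@traj O A H).
Local Notation dataset := (@dataset R O A H).

Context {F : set model} {fs : model} {N : nat} {eps : R}.
Context {g1 g2 : 'I_N -> policy -> traj -> R}.
Hypothesis F_valid : forall {f}, F f -> valid_model f.
Hypothesis F_fs : F fs.
Hypothesis bracket_width :
  forall i p, valid_policy p -> \sum_(t : traj) `|g1 i p t - g2 i p t| <= eps.

Definition in_bracket (i : 'I_N) (f : model) : Prop :=
  forall p t, valid_policy p -> g1 i p t <= traj_prob f p t <= g2 i p t.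

Hypothesis bracket_cover : forall {f}, F f -> exists i, in_bracket i f.

Definition occupied (i : 'I_N) : bool := `[< exists2 f, F f & in_bracket i f >].

Definition upper_lik (i : 'I_N) (D : dataset) : R := \prod_(d <- D) g2 i d.1 d.2.

Definition upper_lik_sum (D : dataset) : R := \sum_(i < N | occupied i) upper_lik i D.

Lemma upper_lik_ge0 i D : occupied i -> valid_dataset D -> 0 <= upper_lik i D.
Proof.
move=> /asboolP[f Ff fi].
elim=> [|d {}D vd _ IH]; first by rewrite /upper_lik big_nil.
rewrite /upper_lik big_cons mulr_ge0 //.
apply: le_trans (traj_prob_ge0 d.2 (F_valid Ff) vd) _.
by case/andP: (fi _ d.2 vd).
Qed.

Lemma upper_lik_sum_ge0 D : valid_dataset D -> 0 <= upper_lik_sum D.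
Proof. by move=> vD; apply: sumr_ge0 => i /upper_lik_ge0; apply. Qed.

Lemma lik_le_upper_lik [f i D] :
  F f -> in_bracket i f -> valid_dataset D -> lik f D <= upper_lik i D.
Proof.
move=> Ff fi; have vf := F_valid Ff.
elim=> [|d {}D vd vD IH]; first by rewrite /lik /upper_lik !big_nil.
rewrite /lik /upper_lik !big_cons ler_pM ?traj_prob_ge0 ?lik_ge0 //.
by case/andP: (fi _ d.2 vd).
Qed.

Lemma lik_le_upper_lik_sum [f D] :
  F f -> valid_dataset D -> lik f D <= upper_lik_sum D.
Proof.
move=> Ff vD; have [i fi] := bracket_cover Ff.
have occ_i : occupied i by apply/asboolP; exists f.
apply: le_trans (lik_le_upper_lik Ff fi vD) _.
rewrite /upper_lik_sum (bigD1 i) //= lerDl.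
by apply: sumr_ge0 => j /andP[occ_j _]; apply: upper_lik_ge0.
Qed.

Lemma sum_upper_bracket_le i p :
  occupied i -> valid_policy p -> \sum_t g2 i p t <= 1 + eps.
Proof.
move=> /asboolP[f Ff fi] vp.
rewrite -(sum_traj_prob (H:=H) (F_valid Ff) vp).
rewrite -[\sum_t g2 i p t](subrK (\sum_t g1 i p t)) addrC -sumrB.
rewrite lerD ?ler_sum // => [t _|]; first by case/andP: (fi p t vp).
apply: le_trans (bracket_width i p vp); apply: ler_sum => t _.
by rewrite distrC ler_norm.
Qed.

Lemma rejected_lik_le beta D : valid_dataset D -> ~ mleB F beta D fs ->
  lik fs D * expR beta <= upper_lik_sum D.
Proof.
move=> vD rejected; have vfs := F_valid F_fs.
have := lik_ge0 vfs vD; rewrite le_eqVlt => /predU1P[<-|lik_gt0].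
  by rewrite mul0r upper_lik_sum_ge0.
have : (loglik fs D + beta%:E < ereal_sup [set loglik g D | g in F])%E.
  by rewrite -lteBrDr // ltNge; apply/negP => accepted; apply: rejected.
rewrite (loglik_lik vfs vD) /eln lik_gt0 => /ereal_sup_gt[_ [g Fg <-]].
rewrite (loglik_lik (F_valid Fg) vD) /eln; case: ifP => // lik_g_gt0.
rewrite -EFinD lte_fin => lt_g; apply: le_trans (lik_le_upper_lik_sum Fg vD).
by rewrite -[lik fs D]lnK ?posrE // -expRD -[lik g D]lnK ?posrE // ltW // ltr_expR.
Qed.

Lemma valid_dataset_rcons [D : dataset] [p : policy] t :
  valid_dataset D -> valid_policy p -> valid_dataset (rcons D (p, t)).
Proof.
by move=> vD vp; rewrite -cats1; apply/List.Forall_app; split=> //; constructor.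
Qed.

Lemma lik_rcons f (D : dataset) p t :
  lik f (rcons D (p, t)) = lik f D * traj_prob f p t.
Proof. by rewrite /lik big_rcons. Qed.

Lemma sum_upper_lik_sum_rcons D p : valid_dataset D -> valid_policy p ->
  \sum_t upper_lik_sum (rcons D (p, t)) <= (1 + eps) * upper_lik_sum D.
Proof.
move=> vD vp; rewrite exchange_big /= mulr_sumr; apply: ler_sum => i occ_i.
have -> : \sum_t upper_lik i (rcons D (p, t)) = upper_lik i D * \sum_t g2 i p t.
  by rewrite mulr_sumr; apply: eq_bigr => t _; rewrite /upper_lik big_rcons.
by rewrite mulrC ler_wpM2r ?upper_lik_ge0 ?sum_upper_bracket_le.
Qed.

Definition lik_lb (c : R) (cont : dataset -> R) : Prop :=
  forall D, valid_dataset D -> lik fs D - c * upper_lik_sum D <= lik fs D * cont D.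

Lemma lik_lb_le [c c' cont] : c <= c' -> lik_lb c cont -> lik_lb c' cont.
Proof.
move=> le_cc' lb D vD; apply: le_trans (lb D vD).
by rewrite lerD2l lerN2 ler_wpM2r ?upper_lik_sum_ge0.
Qed.

Hypothesis eps_ge0 : 0 <= eps.

Lemma lik_lb_episodes [c cont ps] : 0 <= c -> List.Forall valid_policy ps ->
  lik_lb c cont ->
  lik_lb (c * (1 + eps) ^+ size ps) (fun D => episodes H fs ps D cont).
Proof.
move=> c_ge0 vps lb; elim: vps => [|p {}ps vp vps IH] D vD /=.
  by rewrite expr0 mulr1; apply: lb.
rewrite [X in _ <= X]mulr_sumr; under eq_bigr do rewrite mulrA -lik_rcons.
apply: le_trans (ler_sum _ (fun t _ => IH _ (valid_dataset_rcons t vD vp))).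
under [X in _ <= X]eq_bigr do rewrite lik_rcons.
rewrite sumrB -mulr_sumr (sum_traj_prob (F_valid F_fs) vp) mulr1 lerD2l lerN2.
rewrite -mulr_sumr exprSr -!mulrA; apply: (ler_wpM2l c_ge0).
apply: ler_wpM2l; first by rewrite exprn_ge0 ?addr_ge0.
exact: sum_upper_lik_sum_rcons.
Qed.

Lemma upper_lik_sum_nil_le : upper_lik_sum [::] <= N%:R.
Proof.
rewrite /upper_lik_sum big_mkcond -[N in N%:R]card_ord -sumr_const.
by apply: ler_sum => i _; case: ifP => _; rewrite ?/upper_lik ?big_nil.
Qed.

Context {beta : R} {UA : nat -> seq (seq A)} {sel : set model -> model * policy}.
Hypothesis A_gt0 : (0 < #|A|)%N.
Hypothesis sel_valid : forall B, valid_policy (sel B).2.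

Let rho := (1 + eps) ^+ (H * UAsize H UA).

Let rho_ge1 : 1 <= rho.
Proof. by rewrite exprn_ege1 // lerDl. Qed.

Let rho_ge0 : 0 <= rho.
Proof. exact: le_trans rho_ge1. Qed.

Lemma lik_lb_explore [c cont p] : 0 <= c -> valid_policy p -> lik_lb c cont ->
  lik_lb (c * rho) (fun D => episodes H fs (explore_list H UA p) D cont).
Proof.
move=> c_ge0 vp lb.
apply: lik_lb_le (lik_lb_episodes c_ge0 (valid_explore_list UA p A_gt0 vp) lb).
by rewrite ler_wpM2l // ler_weXn2l ?lerDl // size_explore_list_le.
Qed.

Let lb_coef_ge0 n : 0 <= n%:R * rho ^+ n * expR (- beta).
Proof. by rewrite mulr_ge0 ?expR_ge0 // mulr_ge0 // exprn_ge0. Qed.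

Let lb_coefM_rho n :
  n%:R * rho ^+ n * expR (- beta) * rho = n%:R * rho ^+ n.+1 * expR (- beta).
Proof. by rewrite exprSr; ring. Qed.

Lemma lik_lb_pgood k : lik_lb (k%:R * rho ^+ k * expR (- beta))
  (fun D => pgood H fs F beta UA sel k (mleB F beta D) D).
Proof.
elim: k => [|k IH] D vD /=; first by rewrite !mul0r subr0 mulr1.
case: asboolP => [_|rejected].
  apply: lik_lb_le (lik_lb_explore (lb_coef_ge0 k) (sel_valid _) IH) D vD.
  rewrite lb_coefM_rho ler_wpM2r ?expR_ge0 //.
  by rewrite ler_wpM2r ?exprn_ge0 ?addr_ge0 // ler_nat.
rewrite mulr0 subr_le0.
apply: (@le_trans _ _ (expR (- beta) * upper_lik_sum D)).
  rewrite -[lik fs D]mulr1 -(expRxMexpNx_1 beta) mulrA mulrC.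
  by rewrite ler_wpM2l ?expR_ge0 ?rejected_lik_le.
rewrite ler_wpM2r ?upper_lik_sum_ge0 // -[X in X <= _]mul1r ler_wpM2r ?expR_ge0 //.
by apply: mulr_ege1; [rewrite ler1n | exact: exprn_ege1].
Qed.

Lemma pgood_ge K : 1 - K.-1%:R * rho ^+ K * expR (- beta) * N%:R
  <= pgood H fs F beta UA sel K F [::].
Proof.
case: K => [|k]; first by rewrite /= !mul0r subr0.
have := lik_lb_explore (lb_coef_ge0 k) (sel_valid F) (lik_lb_pgood k).
move=> /(_ [::] (List.Forall_nil _)).
rewrite /lik big_nil !mul1r lb_coefM_rho /= asboolT //; apply: le_trans.
by rewrite lerD2l lerN2 ler_wpM2l ?upper_lik_sum_nil_le // -lb_coefM_rho mulr_ge0.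
Qed.

End Brackets.

Section Arithmetic.
Context {R : realType}.

(* [expR (-1/2) >= 1/2] bounds [expR (1/2)] by [2]. *)
Lemma expR1_le4 : expR (1 : R) <= 4.
Proof.
have := expR_ge1Dx (- 2^-1 : R).
rewrite expRN -[(expR _)^-1]div1r ler_pdivlMr ?expR_gt0 //.
rewrite [in expR 1](splitr 1) mul1r expRD.
have := expR_gt0 (2^-1 : R); set y := expR 2^-1; nra.
Qed.

Lemma expr1Dinvn_le4 n : (1 + (n%:R)^-1) ^+ n <= 4 :> R.
Proof.
case: n => [|n]; first by rewrite expr0 ler1n.
apply: le_trans expR1_le4; apply: (@le_trans _ _ (expR (n.+1%:R^-1) ^+ n.+1)).
  by rewrite lerXn2r ?nnegrE ?addr_ge0 ?expR_ge0 ?expR_ge1Dx.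
by rewrite -expRM_natl mulfV.
Qed.

Lemma mul4_divX4_le (a : R) [delta x : R] :
  0 < delta -> 0 <= a <= delta * x -> 2 <= x -> 4 * a / x ^+ 4 <= delta / 2.
Proof.
move=> delta_gt0 /andP[a_ge0 a_le] x_ge2.
have x_gt0 : 0 < x by apply: lt_le_trans x_ge2.
have x3_ge8 : 8 <= x ^+ 3.
  have -> : (8 : R) = 2 ^+ 3 by rewrite -natrX.
  by rewrite lerXn2r ?nnegrE ?(ltW x_gt0).
have : 0 <= delta * x * (x ^+ 3 - 8).
  by rewrite mulr_ge0 ?subr_ge0 // mulr_ge0 ?(ltW delta_gt0) ?(ltW x_gt0).
rewrite ler_pdivrMr ?exprn_gt0 // exprSr; set y := x ^+ 3; nra.
Qed.

(* For [K >= 2] and [x := N K M / delta]: [(K - 1) N <= delta x] and [x >= 2]. *)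
Lemma failure_bound_le (K N : nat) [M : nat] [delta : R] :
  (0 < M)%N -> 0 < delta <= 1 ->
  K.-1%:R * ((1 + ((K * M)%:R)^-1) ^+ M) ^+ K
    * expR (- (4 * ln ((N * K * M)%:R / delta))) * N%:R <= delta / 2.
Proof.
move=> M_gt0 /andP[delta_gt0 delta_le1].
have half_delta_ge0 : 0 <= delta / 2 by rewrite divr_ge0 ?ltW.
case: K => [|[|k]]; rewrite ?mul0r //; case: N => [|n]; rewrite ?mulr0 //.
set K := k.+2; set x := (n.+1 * K * M)%:R / delta.
have powK_le4 : ((1 + ((K * M)%:R)^-1) ^+ M) ^+ K <= 4 :> R.
  by rewrite -exprM mulnC expr1Dinvn_le4.
have delta_x : delta * x = (n.+1 * K * M)%:R by rewrite mulrC divfK ?gt_eqF.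
have x_ge2 : 2 <= x.
  apply: le_trans (_ : delta * x <= x).
    by rewrite delta_x ler_nat /K; nia.
  by rewrite ler_piMl // divr_ge0 ?(ltW delta_gt0).
have -> : expR (- (4 * ln x)) = (x ^+ 4)^-1.
  by rewrite expRN -[4]/(4%:R) expRM_natl lnK // posrE (lt_le_trans _ x_ge2).
apply: le_trans (mul4_divX4_le (K.-1%:R * n.+1%:R) delta_gt0 _ x_ge2); last first.
  by rewrite mulr_ge0 //= delta_x -natrM ler_nat /K; nia.
rewrite mulrAC ler_wpM2r ?invr_ge0 ?exprn_ge0 ?(le_trans _ x_ge2) //.
by rewrite mulrAC [4 * _]mulrC; apply: ler_wpM2l => //; rewrite mulr_ge0.
Qed.

End Arithmetic.

Theorem lemma7 (R : realType) :
  exists c : R, 0 < c /\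
  forall (O A : finType) (H K : nat) (UA : nat -> seq (seq A))
    (r : nat -> O -> A -> R) (F : set (@model R O A)) (fs : @model R O A)
    (sel : set (@model R O A) -> @model R O A * @policy R O A)
    (delta : R) (N : nat),
    (0 < #|A|)%N -> (0 < H)%N -> (0 < K)%N ->
    (forall h, uniq (UA h)) -> (0 < UAsize H UA)%N ->
    (forall f, F f -> valid_model f) -> F fs ->
    (forall B, valid_policy (sel B).2) ->
    (forall B, (exists fp, is_argmax H r B fp) -> is_argmax H r B (sel B)) ->
    0 < delta <= 1 ->
    bracket_number H F ((K * H * UAsize H UA)%:R)^-1 N ->
    let beta := c * ln ((N * K * H * UAsize H UA)%:R / delta) in
    1 - delta / 2 <= pgood H fs F beta UA sel K F [::].
Proof.
exists 4; split; first by [].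
move=> O A H K UA r F fs sel delta N A_gt0 H_gt0 _ _ U_gt0 F_valid F_fs.
move=> sel_valid _ delta_bnd [[g1 [g2 [width cover]]] _]; cbv zeta.
have eps_ge0 : 0 <= ((K * H * UAsize H UA)%:R : R)^-1 by rewrite invr_ge0.
apply: le_trans (pgood_ge F_valid F_fs width cover eps_ge0 A_gt0 sel_valid K).
rewrite lerD2l lerN2.
have HU_gt0 : (0 < H * UAsize H UA)%N by rewrite muln_gt0 H_gt0.
by have := failure_bound_le K N HU_gt0 delta_bnd; rewrite !mulnA.
Qed.
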